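(* Let $H$ be a $k$-linear semi-Hopf category and $A$ an $H$-Galois category extension of $B=A^{{\rm co}H}$, and for $x,y\in X$ let $\gamma_{xy}:H_{xy}\to A_{yx}\otimes_{B_x}A_{xy}$, $\gamma_{xy}(h)=({\rm can}^y_{xy})^{-1}(1_y\otimes h)=\sum_i l_i(h)\otimes_{B_x}r_i(h)$. Then for all $x,y,z\in X$, $h\in H_{xy}$, $h'\in H_{yz}$: (a) $\gamma_{xy}(h)\in(A_{yx}\otimes_{B_x}A_{xy})^{B_y}=\{u\mid bu=ub\ \forall b\in B_y\}$; (b) $\gamma_{xz}(hh')=\sum_{i,j}l_i(h')l_j(h)\otimes_{B_x}r_j(h)r_i(h')$ (the right-hand side being the image of $\gamma_{yz}(h')\otimes\gamma_{xy}(h)$ under the map $(a'\otimes_{B_y}b')\otimes(a\otimes_{B_x}b)\mapsto a'a\otimes_{B_x}bb'$, well defined by (a)); (c) $\gamma_{xy}(h_{(1)})\otimes h_{(2)}=\sum_i l_i(h)\otimes_{B_x}r_i(h)_{[0]}\otimes r_i(h)_{[1]}$; (d) $\sum_i l_i(h)r_i(h)=\varepsilon_{xy}(h)1_y$; (e) if moreover $H$ is a Hopf category with antipode $S$, then $\gamma_{xy}(h_{(2)})\otimes S_{xy}(h_{(1)})=\sum_i l_i(h)_{[0]}\otimes_{B_x}r_i(h)\otimes l_i(h)_{[1]}$.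
   Context: Let $k$ be a commutative ring; unadorned $\otimes$ is over $k$. A $k$-linear category $A$ with class of objects $X$ consists of $k$-modules $A_{xy}$, associative compositions $A_{xy}\otimes A_{yz}\to A_{xz}$, $a\otimes b\mapsto ab$, and units $1_x\in A_{xx}$. A $k$-linear semi-Hopf category $H$ (objects $X$) is a $k$-linear category in which each $H_{xy}$ is a $k$-coalgebra with $\Delta_{xy}(h)=h_{(1)}\otimes h_{(2)}$ and counit $\varepsilon_{xy}$, such that $\Delta_{xz}(hh')=h_{(1)}h'_{(1)}\otimes h_{(2)}h'_{(2)}$, $\Delta_{xx}(1_x)=1_x\otimes1_x$, $\varepsilon_{xz}(hh')=\varepsilon_{xy}(h)\varepsilon_{yz}(h')$, $\varepsilon_{xx}(1_x)=1$. It is a Hopf category if there are $k$-linear maps $S_{xy}:H_{xy}\to H_{yx}$ with $h_{(1)}S_{xy}(h_{(2)})=\varepsilon_{xy}(h)1_x$ and $S_{xy}(h_{(1)})h_{(2)}=\varepsilon_{xy}(h)1_y$. A right $H$-comodule category is a $k$-linear category $A$ with objects $X$ such that each $A_{xy}$ is a right $H_{xy}$-comodule, $\rho_{xy}(a)=a_{[0]}\otimes a_{[1]}$, with $\rho_{xz}(ab)=a_{[0]}b_{[0]}\otimes a_{[1]}b_{[1]}$ and $\rho_{xx}(1_x)=1_x\otimes1_x$. Its coinvariants are $B_x=\{a\in A_{xx}\mid\rho_{xx}(a)=a\otimes1_x\}$. The canonical maps are ${\rm can}^z_{xy}:A_{zx}\otimes_{B_x}A_{xy}\to A_{zy}\otimes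 H_{xy}$, $a\otimes_{B_x}a'\mapsto aa'_{[0]}\otimes a'_{[1]}$; $A$ is an $H$-Galois category extension of $B$ if all ${\rm can}^z_{xy}$ are bijective. *)

From HB Require Import structures.
From mathcomp Require Import all_boot all_order all_algebra.
Set Implicit Arguments. Unset Strict Implicit. Unset Printing Implicit Defensive.
Import GRing.Theory.
Local Open Scope ring_scope.

(* Tensor products.  An element of a (relative) tensor product              *)
(*   M (x)_S N   (S acting on M on the right via ra, on N on the left via la,*)
(*                only the elements of S satisfying P being balanced)        *)
(* is represented by a formal sum  sum_i m_i (x) n_i, i.e. a list of pairs.  *)
(* Two formal sums are equal in the tensor product iff they have the same    *)
(* image under every biadditive P-balanced map into an abelian group         *)
(* (universal property of the tensor product).                               *)

Definition tens2 (M N : zmodType) (S : Type) (P : S -> Prop)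
  (ra : M -> S -> M) (la : S -> N -> N) (s t : seq (M * N)) : Prop :=
  forall (V : zmodType) (f : M -> N -> V),
    (forall m m' n, f (m + m') n = f m n + f m' n) ->
    (forall m n n', f m (n + n') = f m n + f m n') ->
    (forall b m n, P b -> f (ra m b) n = f m (la b n)) ->
    \sum_(p <- s) f p.1 p.2 = \sum_(p <- t) f p.1 p.2.

Definition tens3 (M N Q : zmodType)
  (S1 : Type) (P1 : S1 -> Prop) (ra1 : M -> S1 -> M) (la1 : S1 -> N -> N)
  (S2 : Type) (P2 : S2 -> Prop) (ra2 : N -> S2 -> N) (la2 : S2 -> Q -> Q)
  (s t : seq (M * N * Q)) : Prop :=
  forall (V : zmodType) (f : M -> N -> Q -> V),
    (forall m m' n q, f (m + m') n q = f m n q + f m' n q) ->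
    (forall m n n' q, f m (n + n') q = f m n q + f m n' q) ->
    (forall m n q q', f m n (q + q') = f m n q + f m n q') ->
    (forall b m n q, P1 b -> f (ra1 m b) n q = f m (la1 b n) q) ->
    (forall b m n q, P2 b -> f m (ra2 n b) q = f m n (la2 b q)) ->
    \sum_(p <- s) f p.1.1 p.1.2 p.2 = \sum_(p <- t) f p.1.1 p.1.2 p.2.

Definition tk2 (k : comPzRingType) (M N : lmodType k) :=
  @tens2 M N k (fun _ => True) (fun m r => r *: m) (fun r n => r *: n).

Definition tk3 (k : comPzRingType) (M N Q : lmodType k) :=
  @tens3 M N Q k (fun _ => True) (fun m r => r *: m) (fun r n => r *: n)
                k (fun _ => True) (fun m r => r *: m) (fun r n => r *: n).

Definition is_kcat (k : comPzRingType) (X : Type) (C : X -> X -> lmodType k)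
  (comp : forall x y z, C x y -> C y z -> C x z) (one : forall x, C x x) : Prop :=
  [/\ (forall x y z (r : k) (a a' : C x y) (b : C y z),
         comp _ _ _ (r *: a + a') b = r *: comp _ _ _ a b + comp _ _ _ a' b),
      (forall x y z (r : k) (a : C x y) (b b' : C y z),
         comp _ _ _ a (r *: b + b') = r *: comp _ _ _ a b + comp _ _ _ a b'),
      (forall x y z w (a : C x y) (b : C y z) (c : C z w),
         comp _ _ _ (comp _ _ _ a b) c = comp _ _ _ a (comp _ _ _ b c)),
      (forall x y (a : C x y), comp _ _ _ (one x) a = a) &
      (forall x y (a : C x y), comp _ _ _ a (one y) = a)].

(* Delta_xy(h) in H_xy (x) H_xy.                                            *)
Definition is_semiHopf (k : comPzRingType) (X : Type) (H : X -> X -> lmodType k)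
  (compH : forall x y z, H x y -> H y z -> H x z) (oneH : forall x, H x x)
  (delta : forall x y, H x y -> seq (H x y * H x y))
  (eps : forall x y, H x y -> k) : Prop :=
  [/\ is_kcat compH oneH,
      (forall x y, [/\
         (forall (r : k) (h h' : H x y),
            tk2 (delta x y (r *: h + h'))
                ([seq (r *: p.1, p.2) | p <- delta x y h] ++ delta x y h')),
         (forall (r : k) (h h' : H x y),
            eps x y (r *: h + h') = r * eps x y h + eps x y h'),
         (forall h : H x y,
            tk3 [seq (q.1, q.2, p.2) | p <- delta x y h, q <- delta x y p.1]
                [seq (p.1, q.1, q.2) | p <- delta x y h, q <- delta x y p.2]),
         (forall h : H x y, \sum_(p <- delta x y h) eps x y p.1 *: p.2 = h) &
         (forall h : H x y, \sum_(p <- delta x y h) eps x y p.2 *: p.1 = h)]),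
      (forall x y z (h : H x y) (h' : H y z),
         tk2 (delta x z (compH _ _ _ h h'))
             [seq (compH _ _ _ p.1 q.1, compH _ _ _ p.2 q.2)
               | p <- delta x y h, q <- delta y z h']),
      (forall x, tk2 (delta x x (oneH x)) [:: (oneH x, oneH x)]) &
      ((forall x y z (h : H x y) (h' : H y z),
         eps x z (compH _ _ _ h h') = eps x y h * eps y z h') /\
       (forall x, eps x x (oneH x) = 1))].

Definition is_antipode (k : comPzRingType) (X : Type) (H : X -> X -> lmodType k)
  (compH : forall x y z, H x y -> H y z -> H x z) (oneH : forall x, H x x)
  (delta : forall x y, H x y -> seq (H x y * H x y))
  (eps : forall x y, H x y -> k) (S : forall x y, H x y -> H y x) : Prop :=
  forall x y, [/\
    (forall (r : k) (h h' : H x y), S x y (r *: h + h') = r *: S x y h + S x y h'),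
    (forall h : H x y,
       \sum_(p <- delta x y h) compH _ _ _ p.1 (S x y p.2) = eps x y h *: oneH x) &
    (forall h : H x y,
       \sum_(p <- delta x y h) compH _ _ _ (S x y p.1) p.2 = eps x y h *: oneH y)].

(* right H-comodule categories; rho x y a is a representative of rho_xy(a)  *)
Definition is_comodule_cat (k : comPzRingType) (X : Type) (H : X -> X -> lmodType k)
  (compH : forall x y z, H x y -> H y z -> H x z) (oneH : forall x, H x x)
  (delta : forall x y, H x y -> seq (H x y * H x y))
  (eps : forall x y, H x y -> k)
  (A : X -> X -> lmodType k)
  (compA : forall x y z, A x y -> A y z -> A x z) (oneA : forall x, A x x)
  (rho : forall x y, A x y -> seq (A x y * H x y)) : Prop :=
  [/\ is_kcat compA oneA,
      (forall x y, [/\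
         (forall (r : k) (a a' : A x y),
            tk2 (rho x y (r *: a + a'))
                ([seq (r *: p.1, p.2) | p <- rho x y a] ++ rho x y a')),
         (forall a : A x y,
            tk3 [seq (q.1, q.2, p.2) | p <- rho x y a, q <- rho x y p.1]
                [seq (p.1, q.1, q.2) | p <- rho x y a, q <- delta x y p.2]) &
         (forall a : A x y, \sum_(p <- rho x y a) eps x y p.2 *: p.1 = a)]),
      (forall x y z (a : A x y) (b : A y z),
         tk2 (rho x z (compA _ _ _ a b))
             [seq (compA _ _ _ p.1 q.1, compH _ _ _ p.2 q.2)
               | p <- rho x y a, q <- rho y z b]) &
      (forall x, tk2 (rho x x (oneA x)) [:: (oneA x, oneH x)])].

Definition coinv (k : comPzRingType) (X : Type) (H : X -> X -> lmodType k)
  (oneH : forall x, H x x) (A : X -> X -> lmodType k)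
  (rho : forall x y, A x y -> seq (A x y * H x y)) (x : X) (a : A x x) : Prop :=
  tk2 (rho x x a) [:: (a, oneH x)].

(* equality in  A_zx (x)_{B_x} A_xy *)
Definition tB (k : comPzRingType) (X : Type) (H : X -> X -> lmodType k)
  (oneH : forall x, H x x) (A : X -> X -> lmodType k)
  (compA : forall x y z, A x y -> A y z -> A x z)
  (rho : forall x y, A x y -> seq (A x y * H x y)) (z x y : X) :=
  @tens2 (A z x) (A x y) (A x x) (@coinv k X H oneH A rho x)
         (compA z x x) (compA x x y).

Arguments tB {k X H} oneH {A} compA rho z x y.

Definition tB3 (k : comPzRingType) (X : Type) (H : X -> X -> lmodType k)
  (oneH : forall x, H x x) (A : X -> X -> lmodType k)
  (compA : forall x y z, A x y -> A y z -> A x z)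
  (rho : forall x y, A x y -> seq (A x y * H x y)) (z x y : X) (Q : lmodType k) :=
  @tens3 (A z x) (A x y) Q (A x x) (@coinv k X H oneH A rho x)
         (compA z x x) (compA x x y)
         k (fun _ => True) (fun m r => r *: m) (fun r n => r *: n).

Arguments tB3 {k X H} oneH {A} compA rho z x y Q.

Definition can (k : comPzRingType) (X : Type) (H : X -> X -> lmodType k)
  (A : X -> X -> lmodType k)
  (compA : forall x y z, A x y -> A y z -> A x z)
  (rho : forall x y, A x y -> seq (A x y * H x y)) (z x y : X)
  (s : seq (A z x * A x y)) : seq (A z y * H x y) :=
  [seq (compA _ _ _ p.1 q.1, q.2) | p <- s, q <- rho x y p.2].

Definition is_galois (k : comPzRingType) (X : Type) (H : X -> X -> lmodType k)
  (oneH : forall x, H x x) (A : X -> X -> lmodType k)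
  (compA : forall x y z, A x y -> A y z -> A x z)
  (rho : forall x y, A x y -> seq (A x y * H x y)) : Prop :=
  forall z x y,
    (forall s t : seq (A z x * A x y),
        tk2 (can compA rho s) (can compA rho t) ->
        tB oneH compA rho z x y s t) /\
    (forall w : seq (A z y * H x y), exists s : seq (A z x * A x y),
        tk2 (can compA rho s) w).

Definition is_gamma (k : comPzRingType) (X : Type) (H : X -> X -> lmodType k)
  (A : X -> X -> lmodType k)
  (compA : forall x y z, A x y -> A y z -> A x z) (oneA : forall x, A x x)
  (rho : forall x y, A x y -> seq (A x y * H x y)) (x y : X)
  (h : H x y) (s : seq (A y x * A x y)) : Prop :=
  tk2 (can compA rho s) [:: (oneA y, h)].

(* Equality in the tensor products is tested against balanced maps,
   so each identity becomes an identity between sums over representatives.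
   For (a) and (b), injectivity of can reduces the claim to its image under can,
   where gamma(h) becomes 1 (x) h and the comodule-category axioms finish the
   computation; (d) is the image of can(gamma(h)) = 1 (x) h under
   a (x) g |-> eps(g) a.
   For (c) and (e) we need injectivity of can (x) id_Q: a B-balanced map f
   descends along can to the k-balanced map f o can^-1, which is well defined by
   injectivity of can.  The images of both sides under can (x) id_Q are then
   both obtained by applying to can(gamma(h)) = 1 (x) h the map
   a (x) g |-> a (x) g_(1) (x) g_(2) for (c), and
   a (x) g |-> a_[0] (x) g_(2) (x) a_[1] S(g_(1)) for (e). *)

From HB Require Import structures.
From mathcomp Require Import all_boot all_order all_algebra.
From Stdlib Require Import IndefiniteDescription.
Import GRing.Theory.
Local Open Scope ring_scope.
Set Implicit Arguments. Unset Strict Implicit. Unset Printing Implicit Defensive.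

Section Tensor.
Variable k : comPzRingType.
Implicit Types (M N P Q : lmodType k) (V : zmodType).

Definition kbalanced M N V (f : M -> N -> V) :=
  [/\ forall m m' n, f (m + m') n = f m n + f m' n,
      forall m n n', f m (n + n') = f m n + f m n' &
      forall (r : k) m n, f (r *: m) n = f m (r *: n)].

Definition kbalanced3 M N Q V (f : M -> N -> Q -> V) :=
  [/\ forall m m' n q, f (m + m') n q = f m n q + f m' n q,
      forall m n n' q, f m (n + n') q = f m n q + f m n' q,
      forall m n q q', f m n (q + q') = f m n q + f m n q',
      forall (r : k) m n q, f (r *: m) n q = f m (r *: n) q &
      forall (r : k) m n q, f m (r *: n) q = f m n (r *: q)].

Lemma tk2P M N (s t : seq (M * N)) V (f : M -> N -> V) :
  tk2 s t -> kbalanced f -> \sum_(p <- s) f p.1 p.2 = \sum_(p <- t) f p.1 p.2.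
Proof. by move=> Hst [*]; apply: Hst. Qed.

Lemma tk2I M N (s t : seq (M * N)) :
  (forall V (f : M -> N -> V), kbalanced f ->
     \sum_(p <- s) f p.1 p.2 = \sum_(p <- t) f p.1 p.2) -> tk2 s t.
Proof. by move=> Est V f fDl fDr fZ; apply: Est; split=> // r m n; apply: fZ. Qed.

Lemma tk2_refl M N (s : seq (M * N)) : tk2 s s.
Proof. by []. Qed.

Lemma tk3P M N Q (s t : seq (M * N * Q)) V (f : M -> N -> Q -> V) :
  tk3 s t -> kbalanced3 f ->
  \sum_(p <- s) f p.1.1 p.1.2 p.2 = \sum_(p <- t) f p.1.1 p.1.2 p.2.
Proof. by move=> Hst [*]; apply: Hst. Qed.

Lemma tk3I M N Q (s t : seq (M * N * Q)) :
  (forall V (f : M -> N -> Q -> V), kbalanced3 f ->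
     \sum_(p <- s) f p.1.1 p.1.2 p.2 = \sum_(p <- t) f p.1.1 p.1.2 p.2) -> tk3 s t.
Proof.
move=> Est V f fD1 fD2 fD3 fZ12 fZ23; apply: Est.
by split=> // r *; [apply: fZ12 | apply: fZ23].
Qed.

Lemma kbalanced_sumr M N V (f : M -> N -> V) : kbalanced f ->
  forall I (r : seq I) (F : I -> N) m, f m (\sum_(i <- r) F i) = \sum_(i <- r) f m (F i).
Proof.
case=> _ fDr _ I r F m; apply: big_morph => //.
by apply: (@addrI _ (f m 0)); rewrite -fDr !addr0.
Qed.

Lemma kbalanced_suml M N V (f : M -> N -> V) : kbalanced f ->
  forall I (r : seq I) (F : I -> M) n, f (\sum_(i <- r) F i) n = \sum_(i <- r) f (F i) n.
Proof.
case=> fDl _ _ I r F n; apply: (big_morph (f^~ n)) => [m m'|]; first exact: fDl.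
by apply: (@addrI _ (f 0 n)); rewrite -fDl !addr0.
Qed.

Lemma id_linear M : linear (@id M). Proof. by []. Qed.

Lemma linear_fnD M N (f : M -> N) : linear f -> {morph f : u v / u + v}.
Proof. by case/GRing.semilinear_linear. Qed.

Lemma linear_fnZ M N (f : M -> N) : linear f -> forall r u, f (r *: u) = r *: f u.
Proof. by case/GRing.semilinear_linear. Qed.

Lemma scale_linear M (r : k) : linear (fun m : M => r *: m).
Proof. by move=> r' m m'; rewrite scalerDr !scalerA mulrC. Qed.

Lemma linear_fn_sum M N (f : M -> N) I (r : seq I) (F : I -> M) :
  linear f -> f (\sum_(i <- r) F i) = \sum_(i <- r) f (F i).
Proof.
move=> flin; apply: (big_morph f (linear_fnD flin)).
by rewrite -(scale0r 0) linear_fnZ // scale0r.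
Qed.

Lemma kbalanced_comp M N M' N' V (f : M -> N -> V) (phi : M' -> M) (psi : N' -> N) :
  kbalanced f -> linear phi -> linear psi ->
  kbalanced (fun m n => f (phi m) (psi n)).
Proof.
move=> [fDl fDr fZ] philin psilin.
by split=> *; rewrite ?(linear_fnD philin) ?(linear_fnD psilin) ?fDl ?fDr // !linear_fnZ ?fZ.
Qed.

Lemma kbalanced3_comp M N Q M' N' V (f : M -> N -> Q -> V) (phi : M' -> M) (psi : N' -> N) :
  kbalanced3 f -> linear phi -> linear psi ->
  kbalanced3 (fun m n q => f (phi m) (psi n) q).
Proof.
move=> [fD1 fD2 fD3 fZ12 fZ23] philin psilin.
by split=> *; rewrite ?(linear_fnD philin) ?(linear_fnD psilin) ?fD1 ?fD2 ?fD3 //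
  !linear_fnZ ?fZ12 ?fZ23.
Qed.

Lemma kbalanced3_fix1 M N Q V (f : M -> N -> Q -> V) m :
  kbalanced3 f -> kbalanced (f m).
Proof. by case=> _ fD2 fD3 _ fZ23; split. Qed.

Lemma kbalanced3_fix3 M N Q V (f : M -> N -> Q -> V) q :
  kbalanced3 f -> kbalanced (fun m n => f m n q).
Proof. by case=> fD1 fD2 _ fZ12 _; split. Qed.

Definition tensor_linear M P Q (d : M -> seq (P * Q)) := forall (r : k) (m m' : M),
  tk2 (d (r *: m + m')) ([seq (r *: p.1, p.2) | p <- d m] ++ d m').

Section TensorLinear.
Variables (M P Q : lmodType k) (d : M -> seq (P * Q)).
Hypothesis d_linear : tensor_linear d.

Lemma tensor_linear_sumD V (f : P -> Q -> V) m m' : kbalanced f ->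
  \sum_(p <- d (m + m')) f p.1 p.2 =
  \sum_(p <- d m) f p.1 p.2 + \sum_(p <- d m') f p.1 p.2.
Proof.
move=> fbal; rewrite -[m in LHS]scale1r (tk2P (d_linear 1 m m') fbal) big_cat big_map /=.
by under eq_bigr do rewrite scale1r.
Qed.

Lemma tensor_linear_sum0 V (f : P -> Q -> V) : kbalanced f ->
  \sum_(p <- d 0) f p.1 p.2 = 0.
Proof.
move=> fbal; apply: (@addrI _ (\sum_(p <- d 0) f p.1 p.2)).
by rewrite -tensor_linear_sumD // !addr0.
Qed.

Lemma tensor_linear_sumZ V (f : P -> Q -> V) r m : kbalanced f ->
  \sum_(p <- d (r *: m)) f p.1 p.2 = \sum_(p <- d m) f (r *: p.1) p.2.
Proof.
move=> fbal; rewrite -[r *: m]addr0 (tk2P (d_linear r m 0) fbal) big_cat big_map /=.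
by rewrite tensor_linear_sum0 // addr0.
Qed.

Lemma kbalanced_sum_tensor_linear_r N V (f : N -> P -> Q -> V) : kbalanced3 f ->
  kbalanced (fun n m => \sum_(p <- d m) f n p.1 p.2).
Proof.
move=> fbal; have [fD1 _ _ fZ12 _] := fbal; split=> [n n' m|n m m'|r n m] /=.
- by rewrite -big_split; apply: eq_bigr => p _; rewrite fD1.
- exact: tensor_linear_sumD (kbalanced3_fix1 _ fbal).
- rewrite (tensor_linear_sumZ (f := f n)); last exact: kbalanced3_fix1.
  by apply: eq_bigr => p _; rewrite fZ12.
Qed.

Lemma kbalanced_sum_tensor_linear_l N V (f : P -> Q -> N -> V) : kbalanced3 f ->
  kbalanced (fun m n => \sum_(p <- d m) f p.1 p.2 n).
Proof.
move=> fbal; have [_ _ fD3 fZ12 fZ23] := fbal; split=> [m m' n|m n n'|r m n] /=.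
- exact: tensor_linear_sumD (kbalanced3_fix3 _ fbal).
- by rewrite -big_split; apply: eq_bigr => p _; rewrite fD3.
- rewrite (tensor_linear_sumZ (f := fun p q => f p q n)); last exact: kbalanced3_fix3.
  by apply: eq_bigr => p _; rewrite fZ12 fZ23.
Qed.

End TensorLinear.

End Tensor.

Arguments id_linear {k M}.

Section KLinearCategory.
Variables (k : comPzRingType) (X : Type) (C : X -> X -> lmodType k)
  (comp : forall x y z, C x y -> C y z -> C x z) (one : forall x, C x x).
Hypothesis C_cat : is_kcat comp one.

Lemma comp_linearl x y z (b : C y z) : linear (fun a : C x y => comp a b).
Proof. by case: C_cat => compl _ _ _ _ r a a'; apply: compl. Qed.

Lemma comp_linearr x y z (a : C x y) : linear (comp a : C y z -> C x z).
Proof. by case: C_cat => _ compr _ _ _ r b b'; apply: compr. Qed.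

Lemma compDl x y z (a a' : C x y) (b : C y z) : comp (a + a') b = comp a b + comp a' b.
Proof. exact: (linear_fnD (comp_linearl b)). Qed.

Lemma compDr x y z (a : C x y) (b b' : C y z) : comp a (b + b') = comp a b + comp a b'.
Proof. exact: (linear_fnD (comp_linearr a)). Qed.

Lemma compZl x y z r (a : C x y) (b : C y z) : comp (r *: a) b = r *: comp a b.
Proof. exact: (linear_fnZ (comp_linearl b) r a). Qed.

Lemma compZr x y z r (a : C x y) (b : C y z) : comp a (r *: b) = r *: comp a b.
Proof. exact: (linear_fnZ (comp_linearr a) r b). Qed.

Lemma comp_assoc x y z w (a : C x y) (b : C y z) (c : C z w) :
  comp (comp a b) c = comp a (comp b c).
Proof. by case: C_cat. Qed.

Lemma comp1l x y (a : C x y) : comp (one x) a = a. Proof. by case: C_cat. Qed.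

Lemma comp1r x y (a : C x y) : comp a (one y) = a. Proof. by case: C_cat. Qed.

Lemma comp_sumr x y z I (r : seq I) (F : I -> C y z) (a : C x y) :
  comp a (\sum_(i <- r) F i) = \sum_(i <- r) comp a (F i).
Proof. exact: linear_fn_sum (comp_linearr a). Qed.

End KLinearCategory.

Section SemiHopfCategory.
Variables (k : comPzRingType) (X : Type) (H : X -> X -> lmodType k)
  (compH : forall x y z, H x y -> H y z -> H x z) (oneH : forall x, H x x).
Local Unset Implicit Arguments.
Variables (delta : forall x y, H x y -> seq (H x y * H x y)) (eps : forall x y, H x y -> k).
Local Set Implicit Arguments.
Hypothesis H_semiHopf : is_semiHopf compH oneH delta eps.

Lemma semiHopf_cat : is_kcat compH oneH.
Proof. by case: H_semiHopf. Qed.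

Lemma delta_linear x y : tensor_linear (delta x y).
Proof. by case: H_semiHopf => _ /(_ x y) []. Qed.

Lemma delta_coassoc x y (h : H x y) :
  tk3 [seq (q.1, q.2, p.2) | p <- delta x y h, q <- delta x y p.1]
      [seq (p.1, q.1, q.2) | p <- delta x y h, q <- delta x y p.2].
Proof. by case: H_semiHopf => _ /(_ x y) []. Qed.

Lemma delta_counitl x y (h : H x y) : \sum_(p <- delta x y h) eps x y p.1 *: p.2 = h.
Proof. by case: H_semiHopf => _ /(_ x y) []. Qed.

Lemma epsD x y (h h' : H x y) : eps x y (h + h') = eps x y h + eps x y h'.
Proof.
case: H_semiHopf => _ /(_ x y) [_ epslin _ _ _].
by rewrite -[h]scale1r epslin mul1r scale1r.
Qed.

Lemma epsZ x y r (h : H x y) : eps x y (r *: h) = r * eps x y h.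
Proof.
case: H_semiHopf => _ /(_ x y) [_ epslin _ _ _].
have eps0 : eps x y 0 = 0.
  by apply: (@addrI _ (eps x y 0)); rewrite -epsD !addr0.
by rewrite -[r *: h]addr0 epslin eps0 addr0.
Qed.

Section Antipode.
Local Unset Implicit Arguments.
Variable S : forall x y, H x y -> H y x.
Local Set Implicit Arguments.
Hypothesis S_antipode : is_antipode compH oneH delta eps S.

Lemma antipode_linear x y : linear (S x y).
Proof. by case: (S_antipode x y). Qed.

Lemma sum_delta_antipode x y (h : H x y) (V : zmodType) (g : H x y -> H x x -> V) :
  kbalanced g ->
  \sum_(w <- delta x y h) \sum_(d <- delta x y w.2) g d.2 (compH w.1 (S x y d.1)) =
  g h (oneH x).
Proof.
move=> gbal; have [gDl gDr gZ] := gbal; have Hcat := semiHopf_cat.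
have Slin : linear (S x y) by exact: antipode_linear.
pose Psi u v o := g o (compH u (S x y v)).
have Psi_bal : kbalanced3 Psi.
  split=> [u u' v o|u v v' o|u v o o'|r u v o|r u v o]; rewrite /Psi.
  - by rewrite (compDl Hcat) gDr.
  - by rewrite (linear_fnD Slin) (compDr Hcat) gDr.
  - by rewrite gDl.
  - by rewrite (linear_fnZ Slin) (compZl Hcat) (compZr Hcat).
  - by rewrite (linear_fnZ Slin) (compZr Hcat) gZ.
have := tk3P (delta_coassoc h) Psi_bal; rewrite !big_allpairs_dep /= => <-.
transitivity (\sum_(p <- delta x y h) g (eps x y p.1 *: p.2) (oneH x)).
  apply: eq_bigr => p _; rewrite gZ -(kbalanced_sumr gbal).
  by case: (S_antipode x y) => _ ->.
by rewrite -(kbalanced_suml gbal) delta_counitl.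
Qed.

End Antipode.

Section ComoduleCategory.
Variables (A : X -> X -> lmodType k)
  (compA : forall x y z, A x y -> A y z -> A x z) (oneA : forall x, A x x).
Local Unset Implicit Arguments.
Variable rho : forall x y, A x y -> seq (A x y * H x y).
Local Set Implicit Arguments.
Hypothesis A_comodule : is_comodule_cat compH oneH delta eps compA oneA rho.

Lemma comodule_cat : is_kcat compA oneA.
Proof. by case: A_comodule. Qed.

Lemma rho_linear x y : tensor_linear (rho x y).
Proof. by case: A_comodule => _ /(_ x y) []. Qed.

Lemma rho_coassoc x y (a : A x y) :
  tk3 [seq (q.1, q.2, p.2) | p <- rho x y a, q <- rho x y p.1]
      [seq (p.1, q.1, q.2) | p <- rho x y a, q <- delta x y p.2].
Proof. by case: A_comodule => _ /(_ x y) []. Qed.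

Lemma rho_counit x y (a : A x y) : \sum_(p <- rho x y a) eps x y p.2 *: p.1 = a.
Proof. by case: A_comodule => _ /(_ x y) []. Qed.

Lemma sum_rho_mul x y z (a : A x y) (b : A y z) (V : zmodType) (f : A x z -> H x z -> V) :
  kbalanced f ->
  \sum_(p <- rho x z (compA a b)) f p.1 p.2 =
  \sum_(p <- rho x y a) \sum_(q <- rho y z b) f (compA p.1 q.1) (compH p.2 q.2).
Proof.
case: A_comodule => _ _ rho_mul _ fbal.
by rewrite (tk2P (rho_mul _ _ _ a b) fbal) big_allpairs_dep.
Qed.

Lemma sum_rho_one x (V : zmodType) (f : A x x -> H x x -> V) :
  kbalanced f -> \sum_(p <- rho x x (oneA x)) f p.1 p.2 = f (oneA x) (oneH x).
Proof. by case: A_comodule => _ _ _ rho_one fbal; rewrite (tk2P (rho_one x) fbal) big_seq1. Qed.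

Lemma sum_rho_mulr_coinv x y (a : A x y) (b : A y y) (V : zmodType)
    (f : A x y -> H x y -> V) :
  coinv oneH rho b -> kbalanced f ->
  \sum_(p <- rho x y (compA a b)) f p.1 p.2 = \sum_(p <- rho x y a) f (compA p.1 b) p.2.
Proof.
move=> bB fbal; rewrite sum_rho_mul //; apply: eq_bigr => p _.
have Hcat := semiHopf_cat; have Acat := comodule_cat.
have := tk2P bB (kbalanced_comp fbal (comp_linearr Acat p.1) (comp_linearr Hcat p.2)).
by rewrite big_seq1 /= comp1r.
Qed.

Lemma sum_can z x y (s : seq (A z x * A x y)) (V : zmodType) (F : A z y * H x y -> V) :
  \sum_(p <- can compA rho s) F p =
  \sum_(p <- s) \sum_(q <- rho x y p.2) F (compA p.1 q.1, q.2).
Proof. exact: big_allpairs_dep. Qed.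

Lemma is_gamma_sum x y (h : H x y) s (V : zmodType) (f : A y y -> H x y -> V) :
  is_gamma compA oneA rho h s -> kbalanced f ->
  \sum_(p <- s) \sum_(q <- rho x y p.2) f (compA p.1 q.1) q.2 = f (oneA y) h.
Proof. by move=> gs fbal; have := tk2P gs fbal; rewrite sum_can big_seq1. Qed.

Lemma can_scaler z x y r (s : seq (A z x * A x y)) w :
  tk2 (can compA rho s) w ->
  tk2 (can compA rho [seq (p.1, r *: p.2) | p <- s]) [seq (c.1, r *: c.2) | c <- w].
Proof.
move=> sw; apply: tk2I => V g gbal; have [_ _ gZ] := gbal; have Acat := comodule_cat.
have grbal : kbalanced (fun a h => g a (r *: h)).
  exact: kbalanced_comp gbal id_linear (scale_linear r).
rewrite sum_can !big_map -(tk2P sw grbal) sum_can; apply: eq_bigr => p _ /=.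
have := kbalanced_comp gbal (comp_linearr Acat p.1) id_linear.
move/(tensor_linear_sumZ (@rho_linear x y)) => ->.
by apply: eq_bigr => q _; rewrite (compZr Acat) gZ.
Qed.

Definition can3 z x y (Q : lmodType k) (u : seq (A z x * A x y * Q)) :=
  [seq (compA p.1.1 q.1, q.2, p.2) | p <- u, q <- rho x y p.1.2].

Lemma sum_can3 z x y (Q : lmodType k) (u : seq (A z x * A x y * Q)) (V : zmodType)
    (F : A z y * H x y * Q -> V) :
  \sum_(p <- can3 u) F p = \sum_(p <- u) \sum_(q <- rho x y p.1.2) F (compA p.1.1 q.1, q.2, p.2).
Proof. exact: big_allpairs_dep. Qed.

Lemma sum_gamma_comp x y (h : H x y) s : is_gamma compA oneA rho h s ->
  \sum_(p <- s) compA p.1 p.2 = eps x y h *: oneA y.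
Proof.
move=> gs; have Acat := comodule_cat.
have fbal : kbalanced (fun (a : A y y) (g : H x y) => eps x y g *: a).
  split=> [a a' g|a g g'|r a g]; first exact: scalerDr.
    by rewrite epsD scalerDl.
  by rewrite epsZ scalerA mulrC.
rewrite -(is_gamma_sum gs fbal); apply: eq_bigr => p _.
rewrite -[p.2 in LHS]rho_counit (comp_sumr Acat).
by apply: eq_bigr => q _; rewrite (compZr Acat).
Qed.

Section Galois.
Hypothesis A_galois : is_galois oneH compA rho.

Lemma tB_of_can_sum z x y (s t : seq (A z x * A x y)) :
  (forall (V : zmodType) (f : A z y -> H x y -> V), kbalanced f ->
     \sum_(p <- s) \sum_(q <- rho x y p.2) f (compA p.1 q.1) q.2 =
     \sum_(p <- t) \sum_(q <- rho x y p.2) f (compA p.1 q.1) q.2) ->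
  tB oneH compA rho z x y s t.
Proof. by move=> Est; apply: (A_galois z x y).1; apply: tk2I => V f fbal; rewrite !sum_can Est. Qed.

Section CanInverse.
Variables z x y : X.

(* A chosen preimage under can; [descend f] below is f o can^-1 on representatives. *)
Definition can_inv (a : A z y) (h : H x y) : seq (A z x * A x y) :=
  proj1_sig (constructive_indefinite_description _ ((A_galois z x y).2 [:: (a, h)])).

Lemma can_invK a h : tk2 (can compA rho (can_inv a h)) [:: (a, h)].
Proof. by rewrite /can_inv; case: constructive_indefinite_description. Qed.

Lemma can_inv_flatten w : tk2 (can compA rho (flatten [seq can_inv c.1 c.2 | c <- w])) w.
Proof.
apply: tk2I => V g gbal; rewrite sum_can big_flatten big_map; apply: eq_bigr => c _.
by have := tk2P (can_invK c.1 c.2) gbal; rewrite sum_can big_seq1.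
Qed.

Definition Bbalanced (V : zmodType) (f : A z x -> A x y -> V) :=
  [/\ forall m m' n, f (m + m') n = f m n + f m' n,
      forall m n n', f m (n + n') = f m n + f m n' &
      forall b m n, coinv oneH rho b -> f (compA m b) n = f m (compA b n)].

Definition descend (V : zmodType) (f : A z x -> A x y -> V) (a : A z y) (h : H x y) :=
  \sum_(p <- can_inv a h) f p.1 p.2.

Variables (V : zmodType) (f : A z x -> A x y -> V).
Hypothesis f_bal : Bbalanced f.

Lemma sum_descend s w : tk2 (can compA rho s) w ->
  \sum_(p <- s) f p.1 p.2 = \sum_(c <- w) descend f c.1 c.2.
Proof.
move=> sw; have -> : \sum_(c <- w) descend f c.1 c.2 =
    \sum_(p <- flatten [seq can_inv c.1 c.2 | c <- w]) f p.1 p.2.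
  by rewrite big_flatten big_map.
have [fDl fDr fB] := f_bal; apply: (A_galois z x y).1 => //.
apply: tk2I => V' g gbal.
by rewrite (tk2P sw gbal) (tk2P (can_inv_flatten w) gbal).
Qed.

Lemma eq_sum_descend w w' : tk2 w w' ->
  \sum_(c <- w) descend f c.1 c.2 = \sum_(c <- w') descend f c.1 c.2.
Proof.
move=> ww'; rewrite -(sum_descend (can_inv_flatten w)); apply: sum_descend.
apply: tk2I => V' g gbal.
by rewrite (tk2P (can_inv_flatten w) gbal) (tk2P ww' gbal).
Qed.

Lemma descend_kbalanced : kbalanced (descend f).
Proof.
split=> [a a' h|a h h'|r a h].
- have := @eq_sum_descend [:: (a + a', h)] [:: (a, h); (a', h)]; rewrite !big_cons !big_nil !addr0; apply.
  by apply: tk2I => V' g [gDl _ _]; rewrite !big_cons !big_nil !addr0 gDl.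
- have := @eq_sum_descend [:: (a, h + h')] [:: (a, h); (a, h')]; rewrite !big_cons !big_nil !addr0; apply.
  by apply: tk2I => V' g [_ gDr _]; rewrite !big_cons !big_nil !addr0 gDr.
- have := @eq_sum_descend [:: (r *: a, h)] [:: (a, r *: h)]; rewrite !big_seq1; apply.
  by apply: tk2I => V' g [_ _ gZ]; rewrite !big_seq1 gZ.
Qed.

End CanInverse.

Lemma tB3_of_can z x y (Q : lmodType k) (u v : seq (A z x * A x y * Q)) :
  tk3 (can3 u) (can3 v) -> tB3 oneH compA rho z x y Q u v.
Proof.
move=> uv V F FD1 FD2 FD3 FB FZ.
have FB3 q : Bbalanced (fun m n => F m n q) by split=> *; [apply: FD1 | apply: FD2 | apply: FB].
pose G a h q := descend (fun m n => F m n q) a h.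
have G_can w : \sum_(p <- can3 w) G p.1.1 p.1.2 p.2 = \sum_(p <- w) F p.1.1 p.1.2 p.2.
  rewrite big_allpairs_dep; apply: eq_bigr => p _.
  have := sum_descend (FB3 p.2) (tk2_refl (can compA rho [:: p.1])).
  by rewrite big_seq1 sum_can big_seq1.
suff G_bal : kbalanced3 G by rewrite -!G_can; apply: tk3P.
have Gq_bal q : kbalanced (fun a h => G a h q) := descend_kbalanced (FB3 q).
split=> [a a' h q|a h h' q|a h q q'|r a h q|r a h q].
- by case: (Gq_bal q).
- by case: (Gq_bal q).
- by rewrite /G /descend -big_split; apply: eq_bigr => p _; rewrite FD3.
- by case: (Gq_bal q).
- have := sum_descend (FB3 q) (can_scaler r (can_invK a h)).
  rewrite big_map big_seq1 /= /G => <-.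
  by rewrite /descend; apply: eq_bigr => p _; rewrite FZ.
Qed.

Lemma gamma_coinv_commute x y (h : H x y) s (b : A y y) :
  is_gamma compA oneA rho h s -> coinv oneH rho b ->
  tB oneH compA rho y x y [seq (compA b p.1, p.2) | p <- s] [seq (p.1, compA p.2 b) | p <- s].
Proof.
move=> gs bB; apply: tB_of_can_sum => V f fbal; rewrite !big_map /=.
have Acat := comodule_cat; transitivity (f b h).
- have := is_gamma_sum gs (kbalanced_comp fbal (comp_linearr Acat b) id_linear).
  rewrite /= (comp1r Acat) => <-.
  by apply: eq_bigr => p _; apply: eq_bigr => q _; rewrite (comp_assoc Acat).
- have := is_gamma_sum gs (kbalanced_comp fbal (comp_linearl Acat b) id_linear).
  rewrite /= (comp1l Acat) => <-; apply: eq_bigr => p _.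
  rewrite (sum_rho_mulr_coinv _ bB (kbalanced_comp fbal (comp_linearr Acat p.1) id_linear)).
  by apply: eq_bigr => q _; rewrite (comp_assoc Acat).
Qed.

Lemma gamma_comp x y z (h : H x y) (h' : H y z) s t w :
  is_gamma compA oneA rho h s -> is_gamma compA oneA rho h' t ->
  is_gamma compA oneA rho (compH h h') w ->
  tB oneH compA rho z x z w [seq (compA q.1 p.1, compA p.2 q.2) | q <- t, p <- s].
Proof.
move=> gs gt gw; apply: tB_of_can_sum => V f fbal.
have Acat := comodule_cat; have Hcat := semiHopf_cat.
rewrite (is_gamma_sum gw fbal) big_allpairs_dep /=.
have := is_gamma_sum gt (kbalanced_comp fbal id_linear (comp_linearr Hcat h)).
rewrite /= => <-; apply: eq_bigr => q _.
transitivity (\sum_(e <- rho y z q.2) \sum_(p <- s) \sum_(u <- rho x y p.2)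
    f (compA q.1 (compA (compA p.1 u.1) e.1)) (compH u.2 e.2)).
  apply: eq_bigr => e _.
  have := is_gamma_sum gs (kbalanced_comp
    (kbalanced_comp fbal (comp_linearr Acat q.1) id_linear)
    (comp_linearl Acat e.1) (comp_linearl Hcat e.2)).
  by rewrite /= (comp1l Acat) => ->.
rewrite exchange_big; apply: eq_bigr => p _.
rewrite (sum_rho_mul _ _ (kbalanced_comp fbal (comp_linearr Acat _) id_linear)) exchange_big /=.
by apply: eq_bigr => u _; apply: eq_bigr => e _; rewrite !(comp_assoc Acat).
Qed.

Lemma gamma_colinear x y (g : H x y -> seq (A y x * A x y)) (h : H x y) :
  (forall h, is_gamma compA oneA rho h (g h)) ->
  tB3 oneH compA rho y x y (H x y)
    [seq (q.1, q.2, p.2) | p <- delta x y h, q <- g p.1]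
    [seq (p.1, q.1, q.2) | p <- g h, q <- rho x y p.2].
Proof.
move=> gg; apply: tB3_of_can; apply: tk3I => V F Fbal.
have Acat := comodule_cat; rewrite !sum_can3 !big_allpairs_dep /=.
pose T a h := \sum_(w <- delta x y h) F a w.1 w.2.
have Tbal : kbalanced T := kbalanced_sum_tensor_linear_r (@delta_linear x y) Fbal.
transitivity (T (oneA y) h).
  by apply: eq_bigr => p _; apply: is_gamma_sum (gg p.1) (kbalanced3_fix3 p.2 Fbal).
rewrite -(is_gamma_sum (gg h) Tbal); apply: eq_bigr => p _.
have := tk3P (rho_coassoc p.2) (kbalanced3_comp Fbal (comp_linearr Acat p.1) id_linear).
by rewrite !big_allpairs_dep /= => ->.
Qed.

Section Antipode.
Local Unset Implicit Arguments.
Variable S : forall x y, H x y -> H y x.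
Local Set Implicit Arguments.
Hypothesis S_antipode : is_antipode compH oneH delta eps S.

Lemma gamma_antipode x y (g : H x y -> seq (A y x * A x y)) (h : H x y) :
  (forall h, is_gamma compA oneA rho h (g h)) ->
  tB3 oneH compA rho y x y (H y x)
    [seq (q.1, q.2, S x y p.1) | p <- delta x y h, q <- g p.2]
    [seq (q.1, p.2, q.2) | p <- g h, q <- rho y x p.1].
Proof.
move=> gg; apply: tB3_of_can; apply: tk3I => V F Fbal.
have Acat := comodule_cat; have Hcat := semiHopf_cat.
have Slin : linear (S x y) by exact: antipode_linear.
have [FD1 FD2 FD3 FZ12 FZ23] := Fbal.
rewrite !sum_can3 !big_allpairs_dep /=.
pose T1 a u kk := \sum_(d <- delta x y kk) F a d.2 (compH u (S x y d.1)).
have T1_bal : kbalanced3 T1.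
  have T1a_bal a : kbalanced (T1 a).
    apply: (kbalanced_sum_tensor_linear_r (@delta_linear x y)
              (f := fun u m n => F a n (compH u (S x y m)))).
    split=> [u u' m n|u m m' n|u m n n'|r u m n|r u m n].
    - by rewrite (compDl Hcat) FD3.
    - by rewrite (linear_fnD Slin) (compDr Hcat) FD3.
    - by rewrite FD2.
    - by rewrite (linear_fnZ Slin) (compZl Hcat) (compZr Hcat).
    - by rewrite (linear_fnZ Slin) (compZr Hcat) FZ23.
  split=> [a a' u kk|a u u' kk|a u kk kk'|r a u kk|r a u kk]; try by case: (T1a_bal a).
  - by rewrite /T1 -big_split; apply: eq_bigr => d _; rewrite FD1.
  - by apply: eq_bigr => d _; rewrite FZ12 FZ23 (compZl Hcat).
pose T c kk := \sum_(cr <- rho y y c) T1 cr.1 cr.2 kk.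
have T_bal : kbalanced T := kbalanced_sum_tensor_linear_l (@rho_linear y y) T1_bal.
transitivity (T (oneA y) h).
  rewrite /T (sum_rho_one (kbalanced3_fix3 h T1_bal)) /T1 /=.
  by apply: eq_bigr => p _; rewrite (is_gamma_sum (gg p.2) (kbalanced3_fix3 _ Fbal)) (comp1l Hcat).
rewrite -(is_gamma_sum (gg h) T_bal); apply: eq_bigr => p _.
transitivity (\sum_(e <- rho x y p.2) \sum_(q <- rho y x p.1) \sum_(e' <- rho x y e.1)
    T1 (compA q.1 e'.1) (compH q.2 e'.2) e.2).
  by apply: eq_bigr => e _; rewrite /T (sum_rho_mul _ _ (kbalanced3_fix3 _ T1_bal)).
rewrite exchange_big; apply: eq_bigr => q _.
have := tk3P (rho_coassoc p.2)
  (kbalanced3_comp T1_bal (comp_linearr Acat q.1) (comp_linearr Hcat q.2)).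
rewrite !big_allpairs_dep /= => ->; apply: eq_bigr => e _.
have gbal : kbalanced (fun n u => F (compA q.1 e.1) n (compH q.2 u)).
  exact: kbalanced_comp (kbalanced3_fix1 _ Fbal) id_linear (comp_linearr Hcat q.2).
rewrite -[in RHS](comp1r Hcat q.2) -(sum_delta_antipode S_antipode e.2 gbal) /T1.
by apply: eq_bigr => w _; apply: eq_bigr => d _; rewrite (comp_assoc Hcat).
Qed.

End Antipode.

End Galois.
End ComoduleCategory.
End SemiHopfCategory.

Theorem proposition3p7
  (k : comPzRingType) (X : Type)
  (H : X -> X -> lmodType k)
  (compH : forall x y z, H x y -> H y z -> H x z) (oneH : forall x, H x x)
  (delta : forall x y, H x y -> seq (H x y * H x y))
  (eps : forall x y, H x y -> k)
  (A : X -> X -> lmodType k)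
  (compA : forall x y z, A x y -> A y z -> A x z) (oneA : forall x, A x x)
  (rho : forall x y, A x y -> seq (A x y * H x y)) :
  is_semiHopf compH oneH delta eps ->
  is_comodule_cat compH oneH delta eps compA oneA rho ->
  is_galois oneH compA rho ->
  (forall (x y : X) (h : H x y) (s : seq (A y x * A x y)),
     is_gamma compA oneA rho h s ->
     forall b : A y y, coinv oneH rho b ->
       tB oneH compA rho y x y
          [seq (compA _ _ _ b p.1, p.2) | p <- s]
          [seq (p.1, compA _ _ _ p.2 b) | p <- s]) /\
  (forall (x y z : X) (h : H x y) (h' : H y z)
          (s : seq (A y x * A x y)) (t : seq (A z y * A y z))
          (w : seq (A z x * A x z)),
     is_gamma compA oneA rho h s ->
     is_gamma compA oneA rho h' t ->
     is_gamma compA oneA rho (compH _ _ _ h h') w ->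
     tB oneH compA rho z x z w
        [seq (compA _ _ _ q.1 p.1, compA _ _ _ p.2 q.2) | q <- t, p <- s]) /\
  (forall (x y : X) (g : H x y -> seq (A y x * A x y)),
     (forall h : H x y, is_gamma compA oneA rho h (g h)) ->
     forall (h : H x y),
       tB3 oneH compA rho y x y (H x y)
          [seq (q.1, q.2, p.2) | p <- delta x y h, q <- g p.1]
          [seq (p.1, q.1, q.2) | p <- g h, q <- rho x y p.2]) /\
  (forall (x y : X) (h : H x y) (s : seq (A y x * A x y)),
     is_gamma compA oneA rho h s ->
     \sum_(p <- s) compA _ _ _ p.1 p.2 = eps x y h *: oneA y) /\
  (forall S : forall x y, H x y -> H y x,
     is_antipode compH oneH delta eps S ->
     forall (x y : X) (g : H x y -> seq (A y x * A x y)),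
     (forall h : H x y, is_gamma compA oneA rho h (g h)) ->
     forall (h : H x y),
       tB3 oneH compA rho y x y (H y x)
          [seq (q.1, q.2, S x y p.1) | p <- delta x y h, q <- g p.2]
          [seq (q.1, p.2, q.2) | p <- g h, q <- rho y x p.1]).
Proof.
move=> HS HC HG; split; [|split; [|split; [|split]]].
- by move=> x y h s gs b bB; apply: (gamma_coinv_commute HS HC HG gs bB).
- by move=> x y z h h' s t w gs gt gw; apply: (gamma_comp HS HC HG gs gt gw).
- by move=> x y g gg h; apply: (gamma_colinear HS HC HG h gg).
- by move=> x y h s gs; apply: (sum_gamma_comp HS HC gs).
- by move=> S HA x y g gg h; apply: (gamma_antipode HS HC HG HA h gg).
Qed.
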